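(* Consider the partial differential equation $$u_t = f(u) + \frac{1}{x}\bigl(x\, g(u)\, u_x\bigr)_x$$ for $u=u(x,t)$, where $f$ is a smooth function that is not identically zero, and $g(u)=k_1 e^{k_2 u}$ with real constants $k_1\neq 0$, $k_2\neq 0$. Then the equation admits a Lie point symmetry other than (constant multiples of) $X=\frac{\partial}{\partial t}$ if and only if $f$ is of one of the following three types, in which case the equation admits the listed symmetries: (a) If $f(u)=k_3 e^{k_4 u}$ with $k_3\neq 0$, $k_4\neq 0$, then the equation has the symmetries $$X_1=\frac{\partial}{\partial t},\qquad X_2=(k_4-k_2)x\frac{\partial}{\partial x}+2k_4 t\frac{\partial}{\partial t}-2\frac{\partial}{\partial u}.$$ (b) If $f(u)=k_3 e^{k_2 u}+k_5$ with $k_3\neq 0$, $k_5\neq 0$, then the equation has the symmetries $$X_1=\frac{\partial}{\partial t},\qquad X_2=e^{-k_2k_5 t}\frac{\partial}{\partial t}+k_5 e^{-k_2k_5 t}\frac{\partial}{\partial u}.$$ (c) If $f(u)=k_5$ with $k_5\neq 0$, then the equation has the symmetries $$X_1=\frac{\partial}{\partial t},\qquad X_2=e^{-k_2k_5 t}\frac{\partial}{\partial t}+k_5 e^{-k_2k_5 t}\frac{\partial}{\partial u},\qquad X_3=k_2 x\frac{\partial}{\partial x}+2\frac{\partial}{\partial u}.$$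
   Context: A Lie point symmetry of the equation is a vector field $X=\xi(t,x,u)\frac{\partial}{\partial x}+\tau(t,x,u)\frac{\partial}{\partial t}+\eta(t,x,u)\frac{\partial}{\partial u}$ whose second prolongation annihilates $u_t-f(u)-\frac{1}{x}(x g(u)u_x)_x$ on the solution set of the equation (the standard infinitesimal invariance criterion). The equation is a generalized Fisher equation written in cylindrical coordinates, with $x$ the radial variable. For arbitrary $f,g$ the field $\frac{\partial}{\partial t}$ is always a symmetry. *)

From Stdlib Require Import Reals List.
From Coquelicot Require Import Coquelicot.
Open Scope R_scope.

Definition smooth1 (f : R -> R) : Prop :=
  forall (n : nat) (x : R), ex_derive (Derive_n f n) x.

Definition dX (h : R -> R -> R) : R -> R -> R :=
  fun x t => Derive (fun y => h y t) x.
Definition dT (h : R -> R -> R) : R -> R -> R :=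
  fun x t => Derive (fun s => h x s) t.

Inductive dir2 := D2x | D2t.
Fixpoint iterD2 (ds : list dir2) (h : R -> R -> R) : R -> R -> R :=
  match ds with
  | nil => h
  | D2x :: ds' => dX (iterD2 ds' h)
  | D2t :: ds' => dT (iterD2 ds' h)
  end.

Definition smooth2 (h : R -> R -> R) : Prop :=
  forall (ds : list dir2) (x t : R),
    let H := iterD2 ds h in
    ex_derive (fun y => H y t) x /\ ex_derive (fun s => H x s) t /\
    continuous (fun p : R * R => H (fst p) (snd p)) (x, t).

Definition p3x (F : R -> R -> R -> R) : R -> R -> R -> R :=
  fun x t u => Derive (fun y => F y t u) x.
Definition p3t (F : R -> R -> R -> R) : R -> R -> R -> R :=
  fun x t u => Derive (fun s => F x s u) t.
Definition p3u (F : R -> R -> R -> R) : R -> R -> R -> R :=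
  fun x t u => Derive (fun v => F x t v) u.

Inductive dir3 := D3x | D3t | D3u.
Fixpoint iterD3 (ds : list dir3) (F : R -> R -> R -> R) : R -> R -> R -> R :=
  match ds with
  | nil => F
  | D3x :: ds' => p3x (iterD3 ds' F)
  | D3t :: ds' => p3t (iterD3 ds' F)
  | D3u :: ds' => p3u (iterD3 ds' F)
  end.

Definition smooth3_xpos (F : R -> R -> R -> R) : Prop :=
  forall (ds : list dir3) (x t u : R), 0 < x ->
    let G := iterD3 ds F in
    ex_derive (fun y => G y t u) x /\ ex_derive (fun s => G x s u) t /\
    ex_derive (fun v => G x t v) u /\
    continuous (fun p : R * R * R => G (fst (fst p)) (snd (fst p)) (snd p))
      (x, t, u).

(* ---------- second-order jet space J^2 with coordinates
   (x, t, u, u_x, u_t, u_xx, u_xt, u_tt) ---------- *)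
Definition jetfun := R -> R -> R -> R -> R -> R -> R -> R -> R.

(* Delta = u_t - f(u) - (1/x) D_x( x g(u) u_x ), the total derivative
   D_x (x g(u) u_x) = g(u) u_x + x g'(u) u_x u_x + x g(u) u_xx written out. *)
Definition fisherJ (f g : R -> R) : jetfun :=
  fun x t u ux ut uxx uxt utt =>
    ut - f u - (1 / x) * (g u * ux + x * Derive g u * ux * ux + x * g u * uxx).

Definition gexp (k1 k2 : R) : R -> R := fun u => k1 * exp (k2 * u).

(* Second prolongation pr^(2) X of X = xi d/dx + tau d/dt + eta d/du applied
   to the jet function D, evaluated at the 2-jet of the section u at (x,t).
   The prolonged coefficients are eta^J = D_J Q + xi u_{J,x} + tau u_{J,t}
   with characteristic Q = eta - xi u_x - tau u_t, total derivatives being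
   computed along the section u. *)
Definition pr2_apply (xi tau eta : R -> R -> R -> R) (D : jetfun)
    (u : R -> R -> R) (x t : R) : R :=
  let ux := dX u in
  let ut := dT u in
  let Q := fun x t => eta x t (u x t) - xi x t (u x t) * ux x t
                      - tau x t (u x t) * ut x t in
  let Xi := xi x t (u x t) in
  let Ta := tau x t (u x t) in
  let etaX := dX Q x t + Xi * dX ux x t + Ta * dT ux x t in
  let etaT := dT Q x t + Xi * dX ut x t + Ta * dT ut x t in
  let etaXX := dX (dX Q) x t + Xi * dX (dX ux) x t + Ta * dT (dX ux) x t in
  let etaXT := dT (dX Q) x t + Xi * dX (dT ux) x t + Ta * dT (dT ux) x t in
  let etaTT := dT (dT Q) x t + Xi * dX (dT ut) x t + Ta * dT (dT ut) x t in
  let j1 := u x t in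
  let j2 := ux x t in
  let j3 := ut x t in
  let j4 := dX ux x t in
  let j5 := dT ux x t in
  let j6 := dT ut x t in
  Xi * Derive (fun y => D y t j1 j2 j3 j4 j5 j6) x
  + Ta * Derive (fun s => D x s j1 j2 j3 j4 j5 j6) t
  + eta x t (u x t) * Derive (fun v => D x t v j2 j3 j4 j5 j6) j1
  + etaX * Derive (fun v => D x t j1 v j3 j4 j5 j6) j2
  + etaT * Derive (fun v => D x t j1 j2 v j4 j5 j6) j3
  + etaXX * Derive (fun v => D x t j1 j2 j3 v j5 j6) j4
  + etaXT * Derive (fun v => D x t j1 j2 j3 j4 v j6) j5
  + etaTT * Derive (fun v => D x t j1 j2 j3 j4 j5 v) j6.

Definition evalJ (D : jetfun) (u : R -> R -> R) (x t : R) : R :=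
  D x t (u x t) (dX u x t) (dT u x t) (dX (dX u) x t) (dT (dX u) x t)
    (dT (dT u) x t).

(* X = xi d/dx + tau d/dt + eta d/du (smooth on x > 0) is a Lie point symmetry
   of D = 0: pr^(2) X (D) = 0 at every 2-jet (realised by a smooth section u
   at a point (x,t) with x > 0) at which D = 0. *)
Definition lie_point_symmetry (D : jetfun) (xi tau eta : R -> R -> R -> R)
  : Prop :=
  smooth3_xpos xi /\ smooth3_xpos tau /\ smooth3_xpos eta /\
  forall u : R -> R -> R, smooth2 u ->
    forall x t : R, 0 < x -> evalJ D u x t = 0 ->
      pr2_apply xi tau eta D u x t = 0.

Definition const_multiple_dt (xi tau eta : R -> R -> R -> R) : Prop :=
  exists c : R, forall x t u, 0 < x ->
    xi x t u = 0 /\ tau x t u = c /\ eta x t u = 0.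

(* The invariance condition is evaluated along quadratic sections, which realise every
   value of (u, u_x, u_xx, u_xt) with u_t given by the equation.  It thus becomes an
   identity in these jet variables, and comparing coefficients gives tau = T(t),
   xi_u = 0, k2 eta = 2 xi_x - tau_t and two further equations, the second of which is
   linear in f and f'.  If eta depends on x, subtracting that equation at two values of
   x gives f' = c e^(k2 u).  Otherwise xi = a x, eta = N(t), and N' = N f' + T' f with
   k2 N = 2 a - T'; at a time where N does not vanish this reads f' = alpha + beta f, and
   splitting N' - alpha N = (beta N + T') f in the values of a non-constant f leaves only
   the three families, unless N = 0 and X is a multiple of d/dt.  Conversely every
   a x d/dx + T(t) d/dt + N(t) d/du with these two relations is a symmetry. *)

From Stdlib Require Import Reals Lra FunctionalExtensionality List Classical.
From Coquelicot Require Import Coquelicot.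
Import ListNotations.
Open Scope R_scope.

Lemma is_derive_zero_const (h : R -> R) a b : (forall s, is_derive h s 0) -> h a = h b.
Proof.
  intros H.
  destruct (MVT_cor4 h (fun _ => 0) a (Rabs (b - a)) (fun c _ => H c) b (Rle_refl _))
    as [c [Hc _]].
  lra.
Qed.

Lemma is_derive_zero_const_pos (h : R -> R) a b : (forall s, 0 < s -> is_derive h s 0) ->
  0 < a -> 0 < b -> h a = h b.
Proof.
  intros H Ha Hb.
  assert (Hmin : 0 < Rmin a b) by (apply Rmin_glb_lt; assumption).
  destruct (MVT_gen h a b (fun _ => 0)) as [c [_ Hc]]; [| |lra].
  - intros s Hs. apply H. lra.
  - intros s Hs. apply continuity_pt_filterlim, (ex_derive_continuous (V := R_NormedModule)).
    exists 0. apply H. lra.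
Qed.

Lemma exp_affine_eq0 (a b k : R) : k <> 0 -> (forall u, a * exp (k * u) + b = 0) ->
  a = 0 /\ b = 0.
Proof.
  intros Hk H.
  pose proof (H 0) as H0. pose proof (H (/ k)) as H1.
  rewrite Rmult_0_r, exp_0 in H0. rewrite Rinv_r in H1 by exact Hk.
  assert (Ha : a = 0).
  { assert (He : 1 + 1 < exp 1) by (apply exp_ineq1; lra).
    apply (Rmult_eq_reg_r (exp 1 - 1)); lra. }
  split; [exact Ha | subst; lra].
Qed.

Lemma ode_affine (f : R -> R) (a b : R) : b <> 0 ->
  (forall u, is_derive f u (a + b * f u)) ->
  forall u, f u = (f 0 + a / b) * exp (b * u) - a / b.
Proof.
  intros Hb Hf u.
  assert (Hc : forall s, is_derive (fun v => (f v + a / b) * exp (- b * v)) s 0).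
  { intros s. auto_derive; [exists (a + b * f s); apply Hf|].
    change (fun x => f x) with f. rewrite (is_derive_unique _ _ _ (Hf s)).
    field. exact Hb. }
  pose proof (is_derive_zero_const _ u 0 Hc) as E. simpl in E.
  rewrite Rmult_0_r, exp_0, Rmult_1_r in E.
  rewrite <- E, Rmult_assoc, <- exp_plus.
  replace (- b * u + b * u) with 0 by ring. rewrite exp_0. ring.
Qed.

Lemma ode_exp (f : R -> R) (c k : R) : k <> 0 ->
  (forall u, is_derive f u (c * exp (k * u))) ->
  forall u, f u = c / k * exp (k * u) + (f 0 - c / k).
Proof.
  intros Hk Hf u.
  assert (Hc : forall s, is_derive (fun v => f v - c / k * exp (k * v)) s 0).
  { intros s. auto_derive; [exists (c * exp (k * s)); apply Hf|].
    change (fun x => f x) with f. rewrite (is_derive_unique _ _ _ (Hf s)).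
    field. exact Hk. }
  pose proof (is_derive_zero_const _ u 0 Hc) as E. simpl in E.
  rewrite Rmult_0_r, exp_0 in E. lra.
Qed.

Lemma is_derive_comp_partial (G Gb : R -> R -> R) (w : R -> R) (y dGa dw : R) :
  locally_2d (fun b a => is_derive (fun z => G z a) b (Gb b a)) (w y) y ->
  continuity_2d_pt Gb (w y) y ->
  is_derive (G (w y)) y dGa ->
  is_derive w y dw ->
  is_derive (fun a => G (w a) a) y (Gb (w y) y * dw + dGa).
Proof.
  intros HGb HcGb HGa Hw.
  assert (Hdiff : differentiable_pt_lim G (w y) y (Gb (w y) y) dGa).
  { apply filterdiff_differentiable_pt_lim.
    apply (is_derive_filterdiff G (w y) y Gb dGa); [|exact HGa|].
    - apply (locally_2d_locally (fun b a => is_derive (fun z => G z a) b (Gb b a))).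
      exact HGb.
    - apply continuity_2d_pt_filterlim. exact HcGb. }
  apply is_derive_Reals.
  replace (Gb (w y) y * dw + dGa) with (Gb (w y) y * dw + dGa * 1) by ring.
  apply (derivable_pt_lim_comp_2d G w (fun a => a)); [exact Hdiff | |].
  - apply is_derive_Reals. exact Hw.
  - apply derivable_pt_lim_id.
Qed.

Lemma continuous3_eps (G : R -> R -> R -> R) x t u :
  continuous (fun p : R * R * R => G (fst (fst p)) (snd (fst p)) (snd p)) (x, t, u) ->
  forall eps : posreal, exists d : posreal, forall a s b,
    Rabs (a - x) < d -> Rabs (s - t) < d -> Rabs (b - u) < d ->
    Rabs (G a s b - G x t u) < eps.
Proof.
  intros Hc eps.
  destruct (Hc (ball (G x t u) eps) (locally_ball _ eps)) as [d Hd].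
  exists d. intros a s b Ha Hs Hb. exact (Hd (a, s, b) (conj (conj Ha Hs) Hb)).
Qed.

Lemma iterD3_app ds ds' F : iterD3 ds (iterD3 ds' F) = iterD3 (ds ++ ds') F.
Proof. induction ds as [|[] ds IH]; simpl; rewrite ?IH; reflexivity. Qed.

Lemma smooth3_xpos_iterD3 ds F : smooth3_xpos F -> smooth3_xpos (iterD3 ds F).
Proof. intros HF ds'. rewrite iterD3_app. apply HF. Qed.

Lemma smooth3_p3x F : smooth3_xpos F -> smooth3_xpos (p3x F).
Proof. exact (smooth3_xpos_iterD3 [D3x] F). Qed.
Lemma smooth3_p3u F : smooth3_xpos F -> smooth3_xpos (p3u F).
Proof. exact (smooth3_xpos_iterD3 [D3u] F). Qed.

Section Smooth3.
Variable F : R -> R -> R -> R.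
Hypothesis HF : smooth3_xpos F.

Lemma is_derive_p3x x t u : 0 < x -> is_derive (fun y => F y t u) x (p3x F x t u).
Proof. intros Hx. apply Derive_correct, (HF [] x t u Hx). Qed.
Lemma is_derive_p3t x t u : 0 < x -> is_derive (fun s => F x s u) t (p3t F x t u).
Proof. intros Hx. apply Derive_correct, (HF [] x t u Hx). Qed.
Lemma is_derive_p3u x t u : 0 < x -> is_derive (fun v => F x t v) u (p3u F x t u).
Proof. intros Hx. apply Derive_correct, (HF [] x t u Hx). Qed.

Lemma is_derive_along_x (w : R -> R) x t dw : 0 < x -> is_derive w x dw ->
  is_derive (fun y => F y t (w y)) x (p3x F x t (w x) + p3u F x t (w x) * dw).
Proof.
  intros Hx Hw. rewrite Rplus_comm.
  apply (is_derive_comp_partial (fun b a => F a t b) (fun b a => p3u F a t b));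
    [| | apply is_derive_p3x; exact Hx | exact Hw].
  - exists (mkposreal x Hx). intros b a _ Ha. apply is_derive_p3u.
    apply Rabs_lt_between' in Ha. simpl in Ha. lra.
  - intros eps.
    destruct (smooth3_p3u F HF [] x t (w x) Hx) as (_ & _ & _ & Hc).
    destruct (continuous3_eps _ x t (w x) Hc eps) as [d Hd].
    exists d. intros b a Hb Ha.
    apply Hd; [exact Ha | rewrite Rminus_diag, Rabs_R0; apply cond_pos | exact Hb].
Qed.

Lemma is_derive_along_t (w : R -> R) x t dw : 0 < x -> is_derive w t dw ->
  is_derive (fun s => F x s (w s)) t (p3t F x t (w t) + p3u F x t (w t) * dw).
Proof.
  intros Hx Hw. rewrite Rplus_comm.
  apply (is_derive_comp_partial (fun b s => F x s b) (fun b s => p3u F x s b));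
    [| | apply is_derive_p3t; exact Hx | exact Hw].
  - exists (mkposreal 1 Rlt_0_1). intros b s _ _. apply is_derive_p3u, Hx.
  - intros eps.
    destruct (smooth3_p3u F HF [] x t (w t) Hx) as (_ & _ & _ & Hc).
    destruct (continuous3_eps _ x t (w t) Hc eps) as [d Hd].
    exists d. intros b s Hb Hs.
    apply Hd; [rewrite Rminus_diag, Rabs_R0; apply cond_pos | exact Hs | exact Hb].
Qed.
End Smooth3.

Lemma iterD2_app ds ds' h : iterD2 ds (iterD2 ds' h) = iterD2 (ds ++ ds') h.
Proof. induction ds as [|[] ds IH]; simpl; rewrite ?IH; reflexivity. Qed.

Lemma smooth2_iterD2 ds h : smooth2 h -> smooth2 (iterD2 ds h).
Proof. intros Hh ds'. rewrite iterD2_app. apply Hh. Qed.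

Lemma smooth2_dX h : smooth2 h -> smooth2 (dX h).
Proof. exact (smooth2_iterD2 [D2x] h). Qed.
Lemma smooth2_dT h : smooth2 h -> smooth2 (dT h).
Proof. exact (smooth2_iterD2 [D2t] h). Qed.

Lemma is_derive_dX h x t : smooth2 h -> is_derive (fun y => h y t) x (dX h x t).
Proof. intros Hh. apply Derive_correct, (Hh [] x t). Qed.
Lemma is_derive_dT h x t : smooth2 h -> is_derive (fun s => h x s) t (dT h x t).
Proof. intros Hh. apply Derive_correct, (Hh [] x t). Qed.

Lemma dX_dT h x t : smooth2 h -> dX (dT h) x t = dT (dX h) x t.
Proof.
  intros Hh. apply Schwarz.
  - exists (mkposreal 1 Rlt_0_1). intros a b _ _.
    destruct (Hh [] a b) as [h1 [h2 _]].
    destruct (Hh [D2t] a b) as [h3 _].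
    destruct (Hh [D2x] a b) as [_ [h4 _]].
    auto.
  - apply continuity_2d_pt_filterlim, (Hh [D2x; D2t] x t).
  - apply continuity_2d_pt_filterlim, (Hh [D2t; D2x] x t).
Qed.

Lemma dX_dX_dT h x t : smooth2 h -> dX (dX (dT h)) x t = dT (dX (dX h)) x t.
Proof.
  intros Hh. rewrite <- (dX_dT (dX h)) by (apply smooth2_dX, Hh).
  unfold dX at 1 3. apply Derive_ext. intros y. apply dX_dT, Hh.
Qed.

(** * The second prolongation *)

Definition totDx (F : R -> R -> R -> R) x t u ux := p3x F x t u + p3u F x t u * ux.
Definition totDt (F : R -> R -> R -> R) x t u ut := p3t F x t u + p3u F x t u * ut.
Definition totDxx (F : R -> R -> R -> R) x t u ux uxx :=
  totDx (p3x F) x t u ux + (totDx (p3u F) x t u ux * ux + p3u F x t u * uxx).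

Definition prol_x (xi tau eta : R -> R -> R -> R) x t u ux ut :=
  totDx eta x t u ux - ux * totDx xi x t u ux - ut * totDx tau x t u ux.
Definition prol_t (xi tau eta : R -> R -> R -> R) x t u ux ut :=
  totDt eta x t u ut - ux * totDt xi x t u ut - ut * totDt tau x t u ut.
Definition prol_xx (xi tau eta : R -> R -> R -> R) x t u ux ut uxx uxt :=
  totDxx eta x t u ux uxx - ux * totDxx xi x t u ux uxx - 2 * uxx * totDx xi x t u ux
  - ut * totDxx tau x t u ux uxx - 2 * uxt * totDx tau x t u ux.

Definition characteristic (xi tau eta : R -> R -> R -> R) (u : R -> R -> R) : R -> R -> R :=
  fun x t => eta x t (u x t) - xi x t (u x t) * dX u x t - tau x t (u x t) * dT u x t.

(* Grouped so that the derivative of a characteristic again has this shape. *)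
Lemma is_derive_minus_mult2 (a b c p q : R -> R) y da db dc dp dq :
  is_derive a y da -> is_derive b y db -> is_derive c y dc ->
  is_derive p y dp -> is_derive q y dq ->
  is_derive (fun s => a s - b s * p s - c s * q s) y
    ((da - b y * dp - c y * dq) - db * p y - dc * q y).
Proof.
  intros Ha Hb Hc Hp Hq.
  auto_derive; [repeat split; eexists; eassumption|].
  change (fun s => a s) with a; change (fun s => b s) with b; change (fun s => c s) with c;
  change (fun s => p s) with p; change (fun s => q s) with q.
  rewrite (is_derive_unique _ _ _ Ha), (is_derive_unique _ _ _ Hb), (is_derive_unique _ _ _ Hc),
    (is_derive_unique _ _ _ Hp), (is_derive_unique _ _ _ Hq).
  ring.
Qed.

Section Prolongation.
Variables (xi tau eta : R -> R -> R -> R) (u : R -> R -> R).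
Hypotheses (Hxi : smooth3_xpos xi) (Htau : smooth3_xpos tau) (Heta : smooth3_xpos eta)
  (Hu : smooth2 u).

Lemma is_derive_section_x F x t : smooth3_xpos F -> 0 < x ->
  is_derive (fun y => F y t (u y t)) x (totDx F x t (u x t) (dX u x t)).
Proof. intros HF Hx. apply (is_derive_along_x F HF (fun y => u y t)); auto using is_derive_dX. Qed.

Lemma is_derive_section_t F x t : smooth3_xpos F -> 0 < x ->
  is_derive (fun s => F x s (u x s)) t (totDt F x t (u x t) (dT u x t)).
Proof. intros HF Hx. apply (is_derive_along_t F HF (fun s => u x s)); auto using is_derive_dT. Qed.

Lemma is_derive_totDx F x t : smooth3_xpos F -> 0 < x ->
  is_derive (fun y => totDx F y t (u y t) (dX u y t)) x
    (totDxx F x t (u x t) (dX u x t) (dX (dX u) x t)).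
Proof.
  intros HF Hx. unfold totDx at 1.
  apply (is_derive_plus (fun y => p3x F y t (u y t))).
  - apply is_derive_section_x; auto using smooth3_p3x.
  - apply (is_derive_mult (fun y => p3u F y t (u y t)) (fun y => dX u y t));
      auto using is_derive_section_x, smooth3_p3u, is_derive_dX, smooth2_dX, Rmult_comm.
Qed.

Lemma is_derive_characteristic_x x t : 0 < x ->
  is_derive (fun y => characteristic xi tau eta u y t) x
    ((totDx eta x t (u x t) (dX u x t) - xi x t (u x t) * dX (dX u) x t
      - tau x t (u x t) * dX (dT u) x t)
     - totDx xi x t (u x t) (dX u x t) * dX u x t
     - totDx tau x t (u x t) (dX u x t) * dT u x t).
Proof.
  intros Hx. unfold characteristic.
  apply (is_derive_minus_mult2 (fun y => eta y t (u y t)) (fun y => xi y t (u y t))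
           (fun y => tau y t (u y t)) (fun y => dX u y t) (fun y => dT u y t));
    auto using is_derive_section_x, is_derive_dX, smooth2_dX, smooth2_dT.
Qed.

Lemma is_derive_characteristic_t x t : 0 < x ->
  is_derive (fun s => characteristic xi tau eta u x s) t
    ((totDt eta x t (u x t) (dT u x t) - xi x t (u x t) * dT (dX u) x t
      - tau x t (u x t) * dT (dT u) x t)
     - totDt xi x t (u x t) (dT u x t) * dX u x t
     - totDt tau x t (u x t) (dT u x t) * dT u x t).
Proof.
  intros Hx. unfold characteristic.
  apply (is_derive_minus_mult2 (fun s => eta x s (u x s)) (fun s => xi x s (u x s))
           (fun s => tau x s (u x s)) (fun s => dX u x s) (fun s => dT u x s));
    auto using is_derive_section_t, is_derive_dT, smooth2_dX, smooth2_dT.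
Qed.

Lemma is_derive_dX_characteristic x t : 0 < x ->
  is_derive (fun y => dX (characteristic xi tau eta u) y t) x
    (((totDxx eta x t (u x t) (dX u x t) (dX (dX u) x t)
       - xi x t (u x t) * dX (dX (dX u)) x t - tau x t (u x t) * dX (dX (dT u)) x t)
      - totDx xi x t (u x t) (dX u x t) * dX (dX u) x t
      - totDx tau x t (u x t) (dX u x t) * dX (dT u) x t)
     - totDx xi x t (u x t) (dX u x t) * dX (dX u) x t
     - totDx tau x t (u x t) (dX u x t) * dX (dT u) x t
     - totDxx xi x t (u x t) (dX u x t) (dX (dX u) x t) * dX u x t
     - totDxx tau x t (u x t) (dX u x t) (dX (dX u) x t) * dT u x t).
Proof.
  intros Hx.
  eapply is_derive_ext_loc.
  { exists (mkposreal x Hx). intros y Hy. apply Rabs_lt_between' in Hy. simpl in Hy.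
    symmetry. apply is_derive_unique, is_derive_characteristic_x. lra. }
  apply (is_derive_minus_mult2
           (fun y => totDx eta y t (u y t) (dX u y t) - xi y t (u y t) * dX (dX u) y t
                     - tau y t (u y t) * dX (dT u) y t)
           (fun y => totDx xi y t (u y t) (dX u y t)) (fun y => totDx tau y t (u y t) (dX u y t))
           (fun y => dX u y t) (fun y => dT u y t));
    auto using is_derive_totDx, is_derive_dX, smooth2_dX, smooth2_dT.
  apply (is_derive_minus_mult2 (fun y => totDx eta y t (u y t) (dX u y t))
           (fun y => xi y t (u y t)) (fun y => tau y t (u y t))
           (fun y => dX (dX u) y t) (fun y => dX (dT u) y t));
    auto using is_derive_totDx, is_derive_section_x, is_derive_dX, smooth2_dX, smooth2_dT.
Qed.

Lemma prolongation_x x t : 0 < x ->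
  dX (characteristic xi tau eta u) x t + xi x t (u x t) * dX (dX u) x t
  + tau x t (u x t) * dT (dX u) x t
  = prol_x xi tau eta x t (u x t) (dX u x t) (dT u x t).
Proof.
  intros Hx.
  rewrite (is_derive_unique _ _ _ (is_derive_characteristic_x x t Hx)
           : dX (characteristic xi tau eta u) x t = _).
  rewrite dX_dT by exact Hu.
  unfold prol_x. ring.
Qed.

Lemma prolongation_t x t : 0 < x ->
  dT (characteristic xi tau eta u) x t + xi x t (u x t) * dX (dT u) x t
  + tau x t (u x t) * dT (dT u) x t
  = prol_t xi tau eta x t (u x t) (dX u x t) (dT u x t).
Proof.
  intros Hx.
  rewrite (is_derive_unique _ _ _ (is_derive_characteristic_t x t Hx)
           : dT (characteristic xi tau eta u) x t = _).
  rewrite dX_dT by exact Hu.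
  unfold prol_t. ring.
Qed.

Lemma prolongation_xx x t : 0 < x ->
  dX (dX (characteristic xi tau eta u)) x t + xi x t (u x t) * dX (dX (dX u)) x t
  + tau x t (u x t) * dT (dX (dX u)) x t
  = prol_xx xi tau eta x t (u x t) (dX u x t) (dT u x t) (dX (dX u) x t) (dT (dX u) x t).
Proof.
  intros Hx.
  rewrite (is_derive_unique _ _ _ (is_derive_dX_characteristic x t Hx)
           : dX (dX (characteristic xi tau eta u)) x t = _).
  rewrite dX_dT, dX_dX_dT by exact Hu.
  unfold prol_xx. ring.
Qed.

End Prolongation.

(** * The determining equation *)

Definition fisherJ_exp (f : R -> R) (k1 k2 : R) : jetfun :=
  fun x t u ux ut uxx uxt utt =>
    ut - f u - (1 / x) * (k1 * exp (k2 * u) * ux + x * (k1 * k2 * exp (k2 * u)) * ux * ux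
                          + x * (k1 * exp (k2 * u)) * uxx).

Lemma fisherJ_gexp f k1 k2 : fisherJ f (gexp k1 k2) = fisherJ_exp f k1 k2.
Proof.
  unfold fisherJ, fisherJ_exp, gexp.
  repeat (apply functional_extensionality; intro).
  rewrite (is_derive_unique _ _ (k1 * k2 * exp (k2 * x1))) by (auto_derive; auto; ring).
  reflexivity.
Qed.

(* (1/x) (x g(u) u_x)_x / g(u) for g(u) = k1 e^(k2 u). *)
Definition fisher_flux (k2 x ux uxx : R) := ux / x + k2 * (ux * ux) + uxx.

Definition fisher_ut (f : R -> R) (k1 k2 x u ux uxx : R) :=
  f u + k1 * exp (k2 * u) * fisher_flux k2 x ux uxx.

Lemma fisherJ_exp_solved f k1 k2 x t u ux ut uxx uxt utt : x <> 0 ->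
  fisherJ_exp f k1 k2 x t u ux ut uxx uxt utt = ut - fisher_ut f k1 k2 x u ux uxx.
Proof. intros Hx. unfold fisherJ_exp, fisher_ut, fisher_flux. field. exact Hx. Qed.

Section FisherPartials.
Variables (f : R -> R) (k1 k2 x t u ux ut uxx uxt utt : R).

Lemma fisherJ_exp_dx : 0 < x ->
  Derive (fun y => fisherJ_exp f k1 k2 y t u ux ut uxx uxt utt) x
  = k1 * exp (k2 * u) * ux / (x * x).
Proof. intros. apply is_derive_unique. unfold fisherJ_exp. auto_derive; [lra|]. field. lra. Qed.

Lemma fisherJ_exp_dt : Derive (fun s => fisherJ_exp f k1 k2 x s u ux ut uxx uxt utt) t = 0.
Proof. unfold fisherJ_exp. apply Derive_const. Qed.

Lemma fisherJ_exp_du : 0 < x -> ex_derive f u ->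
  Derive (fun v => fisherJ_exp f k1 k2 x t v ux ut uxx uxt utt) u
  = - (Derive f u + k2 * (k1 * exp (k2 * u)) * fisher_flux k2 x ux uxx).
Proof.
  intros. apply is_derive_unique. unfold fisherJ_exp, fisher_flux. auto_derive; [auto|].
  change (fun v => f v) with f. field. lra.
Qed.

Lemma fisherJ_exp_dux : 0 < x ->
  Derive (fun v => fisherJ_exp f k1 k2 x t u v ut uxx uxt utt) ux
  = - (k1 * exp (k2 * u) * (1 / x + 2 * k2 * ux)).
Proof. intros. apply is_derive_unique. unfold fisherJ_exp. auto_derive; [auto|]. field. lra. Qed.

Lemma fisherJ_exp_dut : Derive (fun v => fisherJ_exp f k1 k2 x t u ux v uxx uxt utt) ut = 1.
Proof. apply is_derive_unique. unfold fisherJ_exp. auto_derive; auto; ring. Qed.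

Lemma fisherJ_exp_duxx : 0 < x ->
  Derive (fun v => fisherJ_exp f k1 k2 x t u ux ut v uxt utt) uxx = - (k1 * exp (k2 * u)).
Proof. intros. apply is_derive_unique. unfold fisherJ_exp. auto_derive; [auto|]. field. lra. Qed.

Lemma fisherJ_exp_duxt : Derive (fun v => fisherJ_exp f k1 k2 x t u ux ut uxx v utt) uxt = 0.
Proof. unfold fisherJ_exp. apply Derive_const. Qed.

Lemma fisherJ_exp_dutt : Derive (fun v => fisherJ_exp f k1 k2 x t u ux ut uxx uxt v) utt = 0.
Proof. unfold fisherJ_exp. apply Derive_const. Qed.

End FisherPartials.

Definition determining (f : R -> R) (k1 k2 : R) (xi tau eta : R -> R -> R -> R)
    (x t u ux ut uxx uxt : R) :=
  xi x t u * (k1 * exp (k2 * u) * ux / (x * x))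
  - eta x t u * (Derive f u + k2 * (k1 * exp (k2 * u)) * fisher_flux k2 x ux uxx)
  - prol_x xi tau eta x t u ux ut * (k1 * exp (k2 * u) * (1 / x + 2 * k2 * ux))
  + prol_t xi tau eta x t u ux ut
  - prol_xx xi tau eta x t u ux ut uxx uxt * (k1 * exp (k2 * u)).

Lemma pr2_apply_fisher f k1 k2 xi tau eta u x t :
  (forall v, ex_derive f v) ->
  smooth3_xpos xi -> smooth3_xpos tau -> smooth3_xpos eta -> smooth2 u -> 0 < x ->
  pr2_apply xi tau eta (fisherJ f (gexp k1 k2)) u x t
  = determining f k1 k2 xi tau eta x t (u x t) (dX u x t) (dT u x t)
      (dX (dX u) x t) (dT (dX u) x t).
Proof.
  intros Hf Hxi Htau Heta Hu Hx.
  rewrite fisherJ_gexp. unfold pr2_apply. cbv zeta.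
  rewrite fisherJ_exp_dx, fisherJ_exp_dt, fisherJ_exp_du, fisherJ_exp_dux, fisherJ_exp_dut,
    fisherJ_exp_duxx, fisherJ_exp_duxt, fisherJ_exp_dutt by auto.
  fold (characteristic xi tau eta u).
  rewrite prolongation_x, prolongation_t, prolongation_xx by auto.
  unfold determining. ring.
Qed.

Definition quad_section (x0 t0 a b c d e : R) : R -> R -> R :=
  fun x t => a + b * (x - x0) + c * (t - t0) + d * ((x - x0) * (x - x0))
             + e * ((x - x0) * (t - t0)).

Lemma quad_section_at x0 t0 a b c d e : quad_section x0 t0 a b c d e x0 t0 = a.
Proof. unfold quad_section. ring. Qed.

Lemma dX_quad_section x0 t0 a b c d e :
  dX (quad_section x0 t0 a b c d e) = quad_section x0 t0 b (2 * d) e 0 0.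
Proof.
  unfold dX, quad_section. do 2 (apply functional_extensionality; intro).
  apply is_derive_unique. auto_derive; auto. ring.
Qed.

Lemma dT_quad_section x0 t0 a b c d e :
  dT (quad_section x0 t0 a b c d e) = quad_section x0 t0 c e 0 0 0.
Proof.
  unfold dT, quad_section. do 2 (apply functional_extensionality; intro).
  apply is_derive_unique. auto_derive; auto. ring.
Qed.

Lemma iterD2_quad_section ds x0 t0 a b c d e : exists a' b' c' d' e',
  iterD2 ds (quad_section x0 t0 a b c d e) = quad_section x0 t0 a' b' c' d' e'.
Proof.
  induction ds as [|dir ds IH]; [do 5 eexists; reflexivity|].
  destruct IH as (a' & b' & c' & d' & e' & IH).
  destruct dir; simpl; rewrite IH, ?dX_quad_section, ?dT_quad_section; do 5 eexists; reflexivity.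
Qed.

Lemma smooth2_quad_section x0 t0 a b c d e : smooth2 (quad_section x0 t0 a b c d e).
Proof.
  intros ds x t.
  destruct (iterD2_quad_section ds x0 t0 a b c d e) as (a' & b' & c' & d' & e' & ->).
  split; [|split]; [unfold quad_section; auto_derive; auto ..|].
  apply continuity_2d_pt_filterlim. unfold quad_section.
  repeat first [ apply continuity_2d_pt_plus | apply continuity_2d_pt_mult
               | apply continuity_2d_pt_minus | apply continuity_2d_pt_const
               | apply continuity_2d_pt_id1 | apply continuity_2d_pt_id2 ].
Qed.

Lemma lie_point_symmetry_fisher_iff f k1 k2 xi tau eta : (forall v, ex_derive f v) ->
  lie_point_symmetry (fisherJ f (gexp k1 k2)) xi tau eta <->
  smooth3_xpos xi /\ smooth3_xpos tau /\ smooth3_xpos eta /\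
  forall x t u ux uxx uxt, 0 < x ->
    determining f k1 k2 xi tau eta x t u ux (fisher_ut f k1 k2 x u ux uxx) uxx uxt = 0.
Proof.
  intros Hf. split; intros (Hxi & Htau & Heta & Hsym); split; auto; split; auto; split; auto.
  - intros x t u ux uxx uxt Hx.
    (* A quadratic section with the given 2-jet at (x, t), solving the equation there. *)
    set (w := quad_section x t u ux (fisher_ut f k1 k2 x u ux uxx) (uxx / 2) uxt).
    assert (Hw : smooth2 w) by apply smooth2_quad_section.
    assert (Huxx : 2 * (uxx / 2) = uxx) by field.
    specialize (Hsym w Hw x t Hx).
    rewrite pr2_apply_fisher in Hsym by auto.
    unfold evalJ in Hsym. rewrite fisherJ_gexp, fisherJ_exp_solved in Hsym by lra.
    unfold w in Hsym.
    rewrite !dX_quad_section, !dT_quad_section, !quad_section_at, Huxx in Hsym.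
    apply Hsym. ring.
  - intros u Hu x t Hx Hev.
    rewrite pr2_apply_fisher by auto.
    unfold evalJ in Hev. rewrite fisherJ_gexp, fisherJ_exp_solved in Hev by lra.
    replace (dT u x t) with (fisher_ut f k1 k2 x (u x t) (dX u x t) (dX (dX u) x t)) by lra.
    apply Hsym, Hx.
Qed.

(** * Generators a x d/dx + T(t) d/dt + N(t) d/du *)

Definition lin_exp_coef (a b c d k : R) : R -> R -> R -> R :=
  fun x t _ => a * x + b + c * t + d * exp (k * t).

Lemma iterD3_lin_exp_coef ds a b c d k : exists a' b' c' d',
  iterD3 ds (lin_exp_coef a b c d k) = lin_exp_coef a' b' c' d' k.
Proof.
  induction ds as [|dir ds IH]; [do 4 eexists; reflexivity|].
  destruct IH as (a' & b' & c' & d' & IH).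
  destruct dir; simpl; rewrite IH;
    [exists 0, a', 0, 0 | exists 0, c', 0, (d' * k) | exists 0, 0, 0, 0];
    unfold p3x, p3t, p3u, lin_exp_coef;
    do 3 (apply functional_extensionality; intro);
    apply is_derive_unique; auto_derive; auto; ring.
Qed.

Lemma continuous_of_2d (h : R -> R -> R) x t u : continuity_2d_pt h x t ->
  continuous (fun p : R * R * R => h (fst (fst p)) (snd (fst p))) (x, t, u).
Proof.
  intros Hh. apply (continuous_comp fst (fun q : R * R => h (fst q) (snd q))).
  - apply continuous_fst.
  - apply continuity_2d_pt_filterlim, Hh.
Qed.

Lemma smooth3_lin_exp_coef a b c d k F :
  (forall x t u, F x t u = a * x + b + c * t + d * exp (k * t)) -> smooth3_xpos F.
Proof.
  intros HF. replace F with (lin_exp_coef a b c d k)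
    by (do 3 (apply functional_extensionality; intro); symmetry; apply HF).
  intros ds x t u _. destruct (iterD3_lin_exp_coef ds a b c d k) as (a' & b' & c' & d' & ->).
  split; [|split; [|split]]; [unfold lin_exp_coef; auto_derive; auto ..|].
  apply (continuous_of_2d (fun x t => a' * x + b' + c' * t + d' * exp (k * t))).
  repeat first [ apply continuity_2d_pt_plus | apply continuity_2d_pt_mult
               | apply continuity_2d_pt_const | apply continuity_2d_pt_id1
               | apply continuity_2d_pt_id2 ].
  apply (continuity_1d_2d_pt_comp exp (fun _ t => k * t)).
  - apply derivable_continuous_pt, derivable_pt_exp.
  - apply continuity_2d_pt_mult; [apply continuity_2d_pt_const | apply continuity_2d_pt_id2].
Qed.

Ltac ext3 := do 3 (apply functional_extensionality; intro); unfold p3x, p3t, p3u.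

Lemma p3x_lin a : p3x (fun x _ _ => a * x) = fun _ _ _ => a.
Proof. ext3. apply is_derive_unique. auto_derive; auto; ring. Qed.
Lemma p3t_lin a : p3t (fun x _ _ => a * x) = fun _ _ _ => 0.
Proof. ext3. apply Derive_const. Qed.
Lemma p3u_lin a : p3u (fun x _ _ => a * x) = fun _ _ _ => 0.
Proof. ext3. apply Derive_const. Qed.
Lemma p3x_time (S : R -> R) : p3x (fun _ t _ => S t) = fun _ _ _ => 0.
Proof. ext3. apply Derive_const. Qed.
Lemma p3t_time (S S' : R -> R) : (forall t, is_derive S t (S' t)) ->
  p3t (fun _ t _ => S t) = fun _ t _ => S' t.
Proof. intros HS. ext3. apply is_derive_unique, HS. Qed.
Lemma p3u_time (S : R -> R) : p3u (fun _ t _ => S t) = fun _ _ _ => 0.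
Proof. ext3. apply Derive_const. Qed.
Lemma p3x_const c : p3x (fun _ _ _ => c) = fun _ _ _ => 0.
Proof. ext3. apply Derive_const. Qed.

Lemma determining_reduced f k1 k2 a (T T' N N' : R -> R) x t u ux uxx uxt :
  (forall t, is_derive T t (T' t)) -> (forall t, is_derive N t (N' t)) ->
  (forall t, k2 * N t = 2 * a - T' t) ->
  (forall t v, N' t = N t * Derive f v + T' t * f v) -> 0 < x ->
  determining f k1 k2 (fun x _ _ => a * x) (fun _ t _ => T t) (fun _ t _ => N t)
    x t u ux (fisher_ut f k1 k2 x u ux uxx) uxx uxt = 0.
Proof.
  intros HT HN Hscale Hode Hx.
  unfold determining, prol_x, prol_t, prol_xx, totDxx, totDx, totDt.
  rewrite p3x_lin, p3t_lin, p3u_lin, !p3x_time, !p3u_time, (p3t_time T T' HT), (p3t_time N N' HN),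
    p3x_const.
  rewrite (Hode t u). replace (T' t) with (2 * a - k2 * N t) by (rewrite Hscale; ring).
  unfold fisher_ut, fisher_flux. field. lra.
Qed.

Lemma lie_point_symmetry_reduced f k1 k2 xi tau eta a (T T' N N' : R -> R) :
  smooth1 f -> smooth3_xpos xi -> smooth3_xpos tau -> smooth3_xpos eta ->
  (forall x t u, xi x t u = a * x) -> (forall x t u, tau x t u = T t) ->
  (forall x t u, eta x t u = N t) ->
  (forall t, is_derive T t (T' t)) -> (forall t, is_derive N t (N' t)) ->
  (forall t, k2 * N t = 2 * a - T' t) ->
  (forall t v, N' t = N t * Derive f v + T' t * f v) ->
  lie_point_symmetry (fisherJ f (gexp k1 k2)) xi tau eta.
Proof.
  intros Hf Hxi Htau Heta Exi Etau Eeta HT HN Hscale Hode.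
  apply lie_point_symmetry_fisher_iff; [intros v; exact (Hf 0%nat v)|].
  split; [exact Hxi | split; [exact Htau | split; [exact Heta|]]].
  replace xi with (fun x (_ _ : R) => a * x)
    by (do 3 (apply functional_extensionality; intro); symmetry; apply Exi).
  replace tau with (fun (_ : R) t (_ : R) => T t)
    by (do 3 (apply functional_extensionality; intro); symmetry; apply Etau).
  replace eta with (fun (_ : R) t (_ : R) => N t)
    by (do 3 (apply functional_extensionality; intro); symmetry; apply Eeta).
  intros. apply (determining_reduced f k1 k2 a T T' N N'); assumption.
Qed.

Ltac reduced_generator a T T' N N' Hf :=
  apply (lie_point_symmetry_reduced _ _ _ _ _ _ a T T' N N' Hf);
  [ | | | intros; cbv beta; ring | intros; cbv beta; ring | intros; cbv beta; ring
  | intros; auto_derive; auto; ring | intros; auto_derive; auto; ring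
  | intros; cbv beta; ring | ].

Lemma symmetry_time_translation f k1 k2 : smooth1 f ->
  lie_point_symmetry (fisherJ f (gexp k1 k2))
    (fun _ _ _ => 0) (fun _ _ _ => 1) (fun _ _ _ => 0).
Proof.
  intros Hf.
  reduced_generator 0 (fun _ : R => 1) (fun _ : R => 0) (fun _ : R => 0) (fun _ : R => 0) Hf.
  - apply (smooth3_lin_exp_coef 0 0 0 0 0). intros. ring.
  - apply (smooth3_lin_exp_coef 0 1 0 0 0). intros. ring.
  - apply (smooth3_lin_exp_coef 0 0 0 0 0). intros. ring.
  - intros. ring.
Qed.

Lemma symmetry_exp_scaling f k1 k2 k3 k4 : smooth1 f -> (forall v, f v = k3 * exp (k4 * v)) ->
  lie_point_symmetry (fisherJ f (gexp k1 k2))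
    (fun x _ _ => (k4 - k2) * x) (fun _ t _ => 2 * k4 * t) (fun _ _ _ => -2).
Proof.
  intros Hf Hfe.
  reduced_generator (k4 - k2) (fun t => 2 * k4 * t) (fun _ : R => 2 * k4) (fun _ : R => -2)
    (fun _ : R => 0) Hf.
  - apply (smooth3_lin_exp_coef (k4 - k2) 0 0 0 0). intros. ring.
  - apply (smooth3_lin_exp_coef 0 0 (2 * k4) 0 0). intros. ring.
  - apply (smooth3_lin_exp_coef 0 (-2) 0 0 0). intros. ring.
  - intros t v. rewrite (Derive_ext f (fun w => k3 * exp (k4 * w))), Hfe by exact Hfe.
    rewrite (is_derive_unique _ _ (k3 * (k4 * exp (k4 * v)))) by (auto_derive; auto; ring).
    ring.
Qed.

Lemma symmetry_exp_time f k1 k2 k3 k5 : smooth1 f -> (forall v, f v = k3 * exp (k2 * v) + k5) ->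
  lie_point_symmetry (fisherJ f (gexp k1 k2))
    (fun _ _ _ => 0) (fun _ t _ => exp (- k2 * k5 * t)) (fun _ t _ => k5 * exp (- k2 * k5 * t)).
Proof.
  intros Hf Hfe.
  reduced_generator 0 (fun t => exp (- k2 * k5 * t)) (fun t => - k2 * k5 * exp (- k2 * k5 * t))
    (fun t => k5 * exp (- k2 * k5 * t)) (fun t => - k2 * k5 * k5 * exp (- k2 * k5 * t)) Hf.
  - apply (smooth3_lin_exp_coef 0 0 0 0 0). intros. ring.
  - apply (smooth3_lin_exp_coef 0 0 0 1 (- k2 * k5)). intros. ring.
  - apply (smooth3_lin_exp_coef 0 0 0 k5 (- k2 * k5)). intros. ring.
  - intros t v. rewrite (Derive_ext f (fun w => k3 * exp (k2 * w) + k5)), Hfe by exact Hfe.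
    rewrite (is_derive_unique _ _ (k3 * (k2 * exp (k2 * v)))) by (auto_derive; auto; ring).
    ring.
Qed.

Lemma symmetry_const_scaling f k1 k2 k5 : smooth1 f -> (forall v, f v = k5) ->
  lie_point_symmetry (fisherJ f (gexp k1 k2))
    (fun x _ _ => k2 * x) (fun _ _ _ => 0) (fun _ _ _ => 2).
Proof.
  intros Hf Hfe.
  reduced_generator k2 (fun _ : R => 0) (fun _ : R => 0) (fun _ : R => 2) (fun _ : R => 0) Hf.
  - apply (smooth3_lin_exp_coef k2 0 0 0 0). intros. ring.
  - apply (smooth3_lin_exp_coef 0 0 0 0 0). intros. ring.
  - apply (smooth3_lin_exp_coef 0 2 0 0 0). intros. ring.
  - intros t v. rewrite (Derive_ext f (fun _ => k5)) by exact Hfe.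
    rewrite Derive_const. ring.
Qed.

(** * Solving the determining equations *)

Definition vanishes (F : R -> R -> R -> R) := forall x t u, 0 < x -> F x t u = 0.
Definition u_free (F : R -> R -> R -> R) := forall x t u, 0 < x -> F x t u = F x t 0.

Lemma p3x_ext_pos F G x t u : 0 < x -> (forall y, 0 < y -> F y t u = G y t u) ->
  p3x F x t u = p3x G x t u.
Proof.
  intros Hx H. apply Derive_ext_loc.
  exists (mkposreal x Hx). intros y Hy. apply Rabs_lt_between' in Hy. simpl in Hy.
  apply H. lra.
Qed.

Lemma vanishes_p3x F : vanishes F -> vanishes (p3x F).
Proof.
  intros HF x t u Hx. rewrite (p3x_ext_pos F (fun _ _ _ => 0)) by auto.
  unfold p3x. apply Derive_const.
Qed.
Lemma vanishes_p3u F : vanishes F -> vanishes (p3u F).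
Proof.
  intros HF x t u Hx. unfold p3u. rewrite (Derive_ext _ (fun _ => 0)) by auto.
  apply Derive_const.
Qed.

Lemma u_free_p3x F : u_free F -> u_free (p3x F).
Proof. intros HF x t u Hx. apply (p3x_ext_pos F (fun y t _ => F y t 0)); auto. Qed.
Lemma u_free_p3t F : u_free F -> u_free (p3t F).
Proof. intros HF x t u Hx. apply Derive_ext. intros s. apply HF, Hx. Qed.
Lemma u_free_vanishes_p3u F : u_free F -> vanishes (p3u F).
Proof.
  intros HF x t u Hx. unfold p3u. rewrite (Derive_ext _ (fun _ => F x t 0)) by auto.
  apply Derive_const.
Qed.

Lemma vanishes_p3u_u_free F : smooth3_xpos F -> vanishes (p3u F) -> u_free F.
Proof.
  intros Hs HF x t u Hx. apply (is_derive_zero_const (fun v => F x t v)). intros v.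
  rewrite <- (HF x t v Hx). apply is_derive_p3u; assumption.
Qed.

Lemma u_free_u_jet_vanish F x t u : u_free F -> 0 < x ->
  p3u F x t u = 0 /\ p3u (p3x F) x t u = 0 /\ p3x (p3u F) x t u = 0 /\ p3u (p3u F) x t u = 0.
Proof.
  intros HF Hx. pose proof (u_free_vanishes_p3u F HF) as Hu.
  repeat split;
    [ apply Hu | apply (u_free_vanishes_p3u _ (u_free_p3x F HF))
    | apply (vanishes_p3x _ Hu) | apply (vanishes_p3u _ Hu) ]; exact Hx.
Qed.

Section DeterminingEquations.
Variables (f : R -> R) (k1 k2 : R) (xi tau eta : R -> R -> R -> R).
Hypotheses (Hk1 : k1 <> 0) (Hk2 : k2 <> 0)
  (Hxi : smooth3_xpos xi) (Htau : smooth3_xpos tau) (Heta : smooth3_xpos eta)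
  (Hdet : forall x t u ux uxx uxt, 0 < x ->
     determining f k1 k2 xi tau eta x t u ux (fisher_ut f k1 k2 x u ux uxx) uxx uxt = 0).

Let det x t u ux uxx uxt :=
  determining f k1 k2 xi tau eta x t u ux (fisher_ut f k1 k2 x u ux uxx) uxx uxt.

Lemma gexp_neq0 u : k1 * exp (k2 * u) <> 0.
Proof. apply Rmult_integral_contrapositive. split; [exact Hk1 | apply Rgt_not_eq, exp_pos]. Qed.

Lemma tau_p3x_p3u_vanish : vanishes (p3x tau) /\ vanishes (p3u tau).
Proof.
  (* u_xt only enters through the term -2 u_xt (D_x tau) of eta^xx. *)
  assert (H : forall x t u ux, 0 < x -> totDx tau x t u ux = 0).
  { intros x t u ux Hx.
    apply (Rmult_eq_reg_l (2 * (k1 * exp (k2 * u)))); [|pose proof (gexp_neq0 u); lra].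
    transitivity (det x t u ux 0 1 - det x t u ux 0 0).
    - unfold det, determining, prol_xx. ring.
    - unfold det. rewrite !Hdet by exact Hx. ring. }
  split; intros x t u Hx; pose proof (H x t u 0 Hx); pose proof (H x t u 1 Hx);
    unfold totDx in *; lra.
Qed.

Lemma tau_jet_vanish x t u : 0 < x ->
  p3x tau x t u = 0 /\ p3u tau x t u = 0 /\ p3x (p3x tau) x t u = 0 /\
  p3u (p3x tau) x t u = 0 /\ p3x (p3u tau) x t u = 0 /\ p3u (p3u tau) x t u = 0.
Proof.
  intros Hx. destruct tau_p3x_p3u_vanish as [Hx' Hu'].
  repeat split;
    [ apply Hx' | apply Hu' | apply (vanishes_p3x _ Hx') | apply (vanishes_p3u _ Hx')
    | apply (vanishes_p3x _ Hu') | apply (vanishes_p3u _ Hu') ]; exact Hx.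
Qed.

Lemma xi_u_vanish_eta_scaling :
  vanishes (p3u xi) /\
  forall x t u, 0 < x -> k2 * eta x t u = 2 * p3x xi x t u - p3t tau x t u.
Proof.
  (* The u_xx-coefficient, once the tau-terms are gone. *)
  assert (H : forall x t u ux, 0 < x ->
    2 * p3u xi x t u * ux + (2 * p3x xi x t u - p3t tau x t u - k2 * eta x t u) = 0).
  { intros x t u ux Hx.
    destruct (tau_jet_vanish x t u Hx) as (Z1 & Z2 & Z3 & Z4 & Z5 & Z6).
    apply (Rmult_eq_reg_l (k1 * exp (k2 * u))); [|apply gexp_neq0].
    transitivity (det x t u ux 1 0 - det x t u ux 0 0).
    - unfold det, determining, prol_x, prol_t, prol_xx, totDxx, totDx, totDt, fisher_ut.
      rewrite Z1, Z2, Z3, Z4, Z5, Z6. unfold fisher_flux. field. lra.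
    - unfold det. rewrite !Hdet by exact Hx. ring. }
  split; intros x t u Hx; pose proof (H x t u 0 Hx); pose proof (H x t u 1 Hx); lra.
Qed.

Lemma tau_u_free : u_free tau.
Proof. exact (vanishes_p3u_u_free tau Htau (proj2 tau_p3x_p3u_vanish)). Qed.

Lemma xi_u_free : u_free xi.
Proof. exact (vanishes_p3u_u_free xi Hxi (proj1 xi_u_vanish_eta_scaling)). Qed.

Lemma eta_u_free : u_free eta.
Proof.
  intros x t u Hx. apply (Rmult_eq_reg_l k2); [|exact Hk2].
  rewrite !(proj2 xi_u_vanish_eta_scaling) by exact Hx.
  rewrite (u_free_p3x _ xi_u_free x t u Hx), (u_free_p3t _ tau_u_free x t u Hx).
  reflexivity.
Qed.

Let coef_ux_g x t u :=
  xi x t u / (x * x) - k2 * eta x t u / x - 2 * k2 * p3x eta x t u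
  + p3x xi x t u / x - p3t tau x t u / x + p3x (p3x xi) x t u.

Let coef_ux0 x t u :=
  p3t eta x t u - eta x t u * Derive f u - p3t tau x t u * f u
  - k1 * exp (k2 * u) * (p3x eta x t u / x + p3x (p3x eta) x t u).

Lemma det_affine_ux x t u ux : 0 < x ->
  det x t u ux 0 0
  = ux * (k1 * exp (k2 * u) * coef_ux_g x t u - p3t xi x t u) + coef_ux0 x t u.
Proof.
  intros Hx.
  destruct (tau_jet_vanish x t u Hx) as (T1 & T2 & T3 & T4 & T5 & T6).
  destruct (u_free_u_jet_vanish xi x t u xi_u_free Hx) as (X1 & X2 & X3 & X4).
  destruct (u_free_u_jet_vanish eta x t u eta_u_free Hx) as (E1 & E2 & E3 & E4).
  unfold det, determining, prol_x, prol_t, prol_xx, totDxx, totDx, totDt, fisher_ut, fisher_flux,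
    coef_ux_g, coef_ux0.
  rewrite T1, T2, T3, T4, T5, T6, X1, X2, X3, X4, E1, E2, E3, E4.
  (* The u_x^2-terms cancel by the scaling relation. *)
  replace (eta x t u) with ((2 * p3x xi x t u - p3t tau x t u) / k2)
    by (rewrite <- (proj2 xi_u_vanish_eta_scaling) by exact Hx; field; exact Hk2).
  field. lra.
Qed.

Lemma coef_ux_vanish x t u : 0 < x -> coef_ux_g x t u = 0 /\ p3t xi x t u = 0.
Proof.
  intros Hx.
  assert (Hfree : forall v, coef_ux_g x t v = coef_ux_g x t 0 /\ p3t xi x t v = p3t xi x t 0).
  { intros v. unfold coef_ux_g.
    rewrite (xi_u_free x t v Hx), (eta_u_free x t v Hx),
      (u_free_p3x _ eta_u_free x t v Hx), (u_free_p3x _ xi_u_free x t v Hx),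
      (u_free_p3t _ tau_u_free x t v Hx), (u_free_p3x _ (u_free_p3x _ xi_u_free) x t v Hx),
      (u_free_p3t _ xi_u_free x t v Hx).
    split; reflexivity. }
  (* Both coefficients are independent of u, while exp (k2 u) is not. *)
  assert (Hcoef : forall v, k1 * exp (k2 * v) * coef_ux_g x t v - p3t xi x t v = 0).
  { intros v. pose proof (det_affine_ux x t v 1 Hx) as E1.
    pose proof (det_affine_ux x t v 0 Hx) as E0.
    unfold det in E0, E1. rewrite Hdet in E0, E1 by exact Hx. lra. }
  destruct (exp_affine_eq0 (k1 * coef_ux_g x t 0) (- p3t xi x t 0) k2 Hk2) as [H1 H2].
  { intros v. rewrite <- (proj1 (Hfree v)), <- (proj2 (Hfree v)), <- (Hcoef v). ring. }
  rewrite (proj1 (Hfree u)), (proj2 (Hfree u)). split.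
  - apply Rmult_integral in H1 as [H1|H1]; [contradiction | exact H1].
  - lra.
Qed.

Lemma coef_ux0_vanish x t u : 0 < x -> coef_ux0 x t u = 0.
Proof.
  intros Hx. pose proof (det_affine_ux x t u 0 Hx) as E.
  unfold det in E. rewrite Hdet in E by exact Hx. lra.
Qed.

Lemma xi_x_only x t u : 0 < x -> xi x t u = xi x 0 0.
Proof.
  intros Hx. rewrite (xi_u_free x t u Hx).
  apply (is_derive_zero_const (fun s => xi x s 0)). intros s.
  pose proof (is_derive_p3t xi Hxi x s 0 Hx) as H.
  rewrite (proj2 (coef_ux_vanish x s 0 Hx)) in H. exact H.
Qed.

Lemma tau_t_only x t u : 0 < x -> tau x t u = tau 1 t 0.
Proof.
  intros Hx. rewrite (tau_u_free x t u Hx).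
  apply (is_derive_zero_const_pos (fun y => tau y t 0)); [|exact Hx | lra].
  intros y Hy. pose proof (is_derive_p3x tau Htau y t 0 Hy) as H.
  rewrite (proj1 tau_p3x_p3u_vanish y t 0 Hy) in H. exact H.
Qed.

Lemma p3t_tau_t_only x t u : 0 < x -> p3t tau x t u = p3t tau 1 t 0.
Proof. intros Hx. apply Derive_ext. intros s. apply tau_t_only, Hx. Qed.

Lemma eta_split x t u : 0 < x -> k2 * eta x t u = 2 * p3x xi x 0 0 - p3t tau 1 t 0.
Proof.
  intros Hx. rewrite (proj2 xi_u_vanish_eta_scaling), p3t_tau_t_only by exact Hx.
  rewrite (p3x_ext_pos xi (fun y _ _ => xi y 0 0)) by (auto using xi_x_only).
  reflexivity.
Qed.

Lemma p3t_eta_x_free x1 x2 t u : 0 < x1 -> 0 < x2 -> p3t eta x1 t u = p3t eta x2 t u.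
Proof.
  intros H1 H2. set (K := 2 * (p3x xi x1 0 0 - p3x xi x2 0 0) / k2).
  apply is_derive_unique.
  apply (is_derive_ext (fun s => eta x2 s u + K)).
  { intros s. apply (Rmult_eq_reg_l k2); [|exact Hk2].
    rewrite Rmult_plus_distr_l, !eta_split by assumption. unfold K. field. exact Hk2. }
  rewrite <- (Rplus_0_r (p3t eta x2 t u)).
  apply (is_derive_plus (fun s => eta x2 s u) (fun _ => K));
    [apply is_derive_p3t; assumption | exact (is_derive_const K t)].
Qed.

Lemma derive_f_exp_of_eta_x_dependent x1 x2 t : 0 < x1 -> 0 < x2 ->
  eta x1 t 0 <> eta x2 t 0 -> exists c, forall u, Derive f u = c * exp (k2 * u).
Proof.
  intros H1 H2 Hne.
  set (p x := p3x eta x t 0 / x + p3x (p3x eta) x t 0).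
  exists (- k1 * (p x1 - p x2) / (eta x1 t 0 - eta x2 t 0)). intros u.
  (* At two values of x, the eta_t- and f-terms of the u_x-free coefficient agree. *)
  pose proof (coef_ux0_vanish x1 t u H1) as E1. pose proof (coef_ux0_vanish x2 t u H2) as E2.
  unfold coef_ux0 in E1, E2.
  rewrite (p3t_eta_x_free x1 x2 t u H1 H2), p3t_tau_t_only in E1 by exact H1.
  rewrite p3t_tau_t_only in E2 by exact H2.
  rewrite (eta_u_free x1 t u H1), (u_free_p3x _ eta_u_free x1 t u H1),
    (u_free_p3x _ (u_free_p3x _ eta_u_free) x1 t u H1) in E1.
  rewrite (eta_u_free x2 t u H2), (u_free_p3x _ eta_u_free x2 t u H2),
    (u_free_p3x _ (u_free_p3x _ eta_u_free) x2 t u H2) in E2.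
  fold (p x1) in E1. fold (p x2) in E2.
  apply (Rmult_eq_reg_l (eta x1 t 0 - eta x2 t 0)); [|lra].
  transitivity (- k1 * exp (k2 * u) * (p x1 - p x2)); [nra | field; lra].
Qed.

Lemma reduced_of_eta_x_free : (forall x t, 0 < x -> eta x t 0 = eta 1 t 0) ->
  (forall x t u, 0 < x ->
     xi x t u = p3x xi 1 0 0 * x /\ tau x t u = tau 1 t 0 /\ eta x t u = eta 1 t 0) /\
  (forall t, k2 * eta 1 t 0 = 2 * p3x xi 1 0 0 - p3t tau 1 t 0) /\
  (forall t v, p3t eta 1 t 0 = eta 1 t 0 * Derive f v + p3t tau 1 t 0 * f v).
Proof.
  intros Hxfree. set (a := p3x xi 1 0 0).
  assert (HN : forall x t u, 0 < x -> eta x t u = eta 1 t 0)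
    by (intros; rewrite eta_u_free; auto).
  assert (Hscale : forall t, k2 * eta 1 t 0 = 2 * a - p3t tau 1 t 0)
    by (intros t; exact (eta_split 1 t 0 Rlt_0_1)).
  assert (Hex : vanishes (p3x eta)).
  { intros x t u Hx. rewrite (p3x_ext_pos eta (fun _ t _ => eta 1 t 0)), p3x_time by auto.
    reflexivity. }
  assert (Hxi_x : forall x t u, 0 < x -> p3x xi x t u = a).
  { intros x t u Hx. rewrite (p3x_ext_pos xi (fun y _ _ => xi y 0 0)) by (auto using xi_x_only).
    change (p3x xi x 0 0 = a). apply (Rmult_eq_reg_l 2); [|lra].
    pose proof (eta_split x 0 0 Hx) as E. rewrite (HN x 0 0 Hx), Hscale in E. lra. }
  assert (Hxi_xx : vanishes (p3x (p3x xi))).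
  { intros x t u Hx. rewrite (p3x_ext_pos (p3x xi) (fun _ _ _ => a)), p3x_const by auto.
    reflexivity. }
  split; [|split; [exact Hscale|]].
  - intros x t u Hx. split; [|split; [apply tau_t_only | apply HN]; exact Hx].
    pose proof (proj1 (coef_ux_vanish x t u Hx)) as P.
    unfold coef_ux_g in P.
    rewrite (HN x t u Hx), (Hex x t u Hx), (Hxi_x x t u Hx), (Hxi_xx x t u Hx),
      (p3t_tau_t_only x t u Hx) in P.
    rewrite Hscale in P.
    replace (xi x t u) with (x * x * (xi x t u / (x * x))) by (field; lra).
    replace (xi x t u / (x * x)) with (a / x) by (unfold Rdiv in *; lra).
    field. lra.
  - intros t v. pose proof (coef_ux0_vanish 1 t v Rlt_0_1) as A0. unfold coef_ux0 in A0.
    rewrite (HN 1 t v Rlt_0_1), (Hex 1 t v Rlt_0_1), (vanishes_p3x _ Hex 1 t v Rlt_0_1),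
      (u_free_p3t _ eta_u_free 1 t v Rlt_0_1), (p3t_tau_t_only 1 t v Rlt_0_1) in A0.
    lra.
Qed.

End DeterminingEquations.

(** * Classification *)

Definition fisher_family (f : R -> R) (k2 : R) : Prop :=
  (exists k3 k4, k3 <> 0 /\ k4 <> 0 /\ forall v, f v = k3 * exp (k4 * v))
  \/ (exists k3 k5, k3 <> 0 /\ k5 <> 0 /\ forall v, f v = k3 * exp (k2 * v) + k5)
  \/ (exists k5, k5 <> 0 /\ forall v, f v = k5).

Lemma fisher_family_of_exp (f : R -> R) k2 K k D : (exists v, f v <> 0) -> k <> 0 ->
  K = 0 \/ D = 0 \/ k = k2 -> (forall v, f v = K * exp (k * v) + D) -> fisher_family f k2.
Proof.
  intros [v Hv] Hk Hcase Hf.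
  destruct (Req_dec K 0) as [HK|HK]; [|destruct (Req_dec D 0) as [HD|HD]].
  - right; right. exists D. split.
    + intros HD. apply Hv. rewrite Hf, HK, HD. ring.
    + intros w. rewrite Hf, HK. ring.
  - left. exists K, k. repeat split; auto. intros w. rewrite Hf, HD. ring.
  - right; left. exists K, D. repeat split; auto.
    destruct Hcase as [|[|<-]]; [contradiction..|exact Hf].
Qed.

Lemma fisher_family_of_reduced (f : R -> R) k2 a (N N' T' : R -> R) :
  k2 <> 0 -> (forall v, ex_derive f v) -> (exists v, f v <> 0) ->
  (forall t, is_derive N t (N' t)) ->
  (forall t, k2 * N t = 2 * a - T' t) ->
  (forall t v, N' t = N t * Derive f v + T' t * f v) ->
  (exists t0, N t0 <> 0) -> fisher_family f k2.
Proof.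
  intros Hk2 Hf Hnz HN Hscale Hode [t0 Ht0].
  set (al := N' t0 / N t0). set (be := - T' t0 / N t0).
  assert (Hlin : forall u, is_derive f u (al + be * f u)).
  { intros u. replace (al + be * f u) with (Derive f u); [apply Derive_correct, Hf|].
    unfold al, be. rewrite (Hode t0 u). field. exact Ht0. }
  destruct (classic (forall u, f u = f 0)) as [Hconst|Hnconst].
  - apply (fisher_family_of_exp f k2 0 1 (f 0)); auto.
    intros v. rewrite Hconst. ring.
  - apply not_all_ex_not in Hnconst as [u1 Hu1].
    (* N' t = al N t + (be N t + T' t) f u, for two different values of f u. *)
    assert (Hlin' : forall t, be * N t + T' t = 0 /\ N' t = al * N t).
    { intros t.
      assert (E : forall u, N' t = al * N t + (be * N t + T' t) * f u).
      { intros u. rewrite (Hode t u), (is_derive_unique _ _ _ (Hlin u)). ring. }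
      assert (Hc : be * N t + T' t = 0).
      { apply (Rmult_eq_reg_r (f u1 - f 0)); [|lra].
        pose proof (E u1). pose proof (E 0). nra. }
      split; [exact Hc|]. rewrite (E 0), Hc. ring. }
    destruct (Req_dec be k2) as [Hbe|Hbe].
    + apply (fisher_family_of_exp f k2 (f 0 + al / be) be (- (al / be))); auto.
      * rewrite Hbe. exact Hk2.
      * intros v. rewrite (ode_affine f al be) by (auto; rewrite Hbe; exact Hk2). ring.
    + assert (Hal : al = 0).
      { assert (HNc : forall t, N t = 2 * a / (k2 - be)).
        { intros t. apply (Rmult_eq_reg_l (k2 - be)); [|lra].
          pose proof (Hscale t). pose proof (proj1 (Hlin' t)). field_simplify; lra. }
        assert (HN'0 : N' t0 = 0).
        { rewrite <- (is_derive_unique _ _ _ (HN t0)).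
          rewrite (Derive_ext N (fun _ => 2 * a / (k2 - be))) by exact HNc.
          apply Derive_const. }
        apply (Rmult_eq_reg_r (N t0)); [|exact Ht0].
        rewrite <- (proj2 (Hlin' t0)), HN'0. ring. }
      assert (Hbe0 : be <> 0).
      { intros Hb. apply Hu1. apply (is_derive_zero_const f). intros s.
        replace 0 with (al + be * f s) by (rewrite Hal, Hb; ring). apply Hlin. }
      apply (fisher_family_of_exp f k2 (f 0 + al / be) be (- (al / be))); auto.
      * right; left. rewrite Hal. field. exact Hbe0.
      * intros v. rewrite (ode_affine f al be) by auto. ring.
Qed.

Lemma const_multiple_dt_of_reduced (f : R -> R) k2 xi tau eta a :
  smooth3_xpos tau -> (exists v, f v <> 0) ->
  (forall x t u, 0 < x -> xi x t u = a * x /\ tau x t u = tau 1 t 0 /\ eta x t u = eta 1 t 0) ->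
  (forall t, k2 * eta 1 t 0 = 2 * a - p3t tau 1 t 0) ->
  (forall t v, p3t eta 1 t 0 = eta 1 t 0 * Derive f v + p3t tau 1 t 0 * f v) ->
  (forall t, eta 1 t 0 = 0) -> const_multiple_dt xi tau eta.
Proof.
  intros Htau [v Hv] Hform Hscale Hode HN0.
  assert (HT0 : forall t, p3t tau 1 t 0 = 0).
  { intros t. apply (Rmult_eq_reg_r (f v)); [|exact Hv].
    assert (HN'0 : p3t eta 1 t 0 = 0).
    { unfold p3t. rewrite (Derive_ext _ (fun _ => 0)) by exact HN0. apply Derive_const. }
    pose proof (Hode t v) as E. rewrite HN0, HN'0 in E. lra. }
  assert (Ha : a = 0) by (pose proof (Hscale 0); rewrite HN0, HT0 in *; lra).
  exists (tau 1 0 0). intros x t u Hx.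
  destruct (Hform x t u Hx) as (-> & -> & ->). rewrite Ha, HN0.
  split; [ring | split; [|reflexivity]].
  apply (is_derive_zero_const (fun s => tau 1 s 0)). intros s.
  pose proof (is_derive_p3t tau Htau 1 s 0 Rlt_0_1) as Hd. rewrite HT0 in Hd. exact Hd.
Qed.

Lemma fisher_family_of_symmetry f k1 k2 xi tau eta :
  smooth1 f -> (exists v, f v <> 0) -> k1 <> 0 -> k2 <> 0 ->
  lie_point_symmetry (fisherJ f (gexp k1 k2)) xi tau eta -> ~ const_multiple_dt xi tau eta ->
  fisher_family f k2.
Proof.
  intros Hf1 Hnz Hk1 Hk2 Hsym Hnc.
  assert (Hf : forall v, ex_derive f v) by (intros v; exact (Hf1 0%nat v)).
  apply lie_point_symmetry_fisher_iff in Hsym as (Hxi & Htau & Heta & Hdet); [|exact Hf].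
  destruct (classic (forall x t, 0 < x -> eta x t 0 = eta 1 t 0)) as [Hxfree|Hxdep].
  - destruct (reduced_of_eta_x_free f k1 k2 xi tau eta Hk1 Hk2 Hxi Htau Hdet Hxfree)
      as (Hform & Hscale & Hode).
    destruct (classic (exists t0, eta 1 t0 0 <> 0)) as [HN|HN].
    + apply (fisher_family_of_reduced f k2 (p3x xi 1 0 0) (fun t => eta 1 t 0)
               (fun t => p3t eta 1 t 0) (fun t => p3t tau 1 t 0)); auto.
      intros t. apply is_derive_p3t; [exact Heta | lra].
    + exfalso. apply Hnc, (const_multiple_dt_of_reduced f k2 xi tau eta (p3x xi 1 0 0)); auto.
      intros t. apply NNPP. intros Ht. apply HN. exists t. exact Ht.
  - apply not_all_ex_not in Hxdep as [x Hxdep]. apply not_all_ex_not in Hxdep as [t Hxdep].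
    apply imply_to_and in Hxdep as [Hx Hne].
    destruct (derive_f_exp_of_eta_x_dependent f k1 k2 xi tau eta Hk1 Hk2 Hxi Htau Heta Hdet
                x 1 t Hx Rlt_0_1 Hne) as [c Hc].
    apply (fisher_family_of_exp f k2 (c / k2) k2 (f 0 - c / k2)); auto.
    apply ode_exp; [exact Hk2|]. intros u. rewrite <- Hc. apply Derive_correct, Hf.
Qed.

Lemma not_const_multiple_dt xi tau eta x t u : 0 < x -> eta x t u <> 0 ->
  ~ const_multiple_dt xi tau eta.
Proof. intros Hx Heta [c Hc]. apply Heta, (Hc x t u Hx). Qed.

Lemma symmetry_of_fisher_family f k1 k2 : smooth1 f -> fisher_family f k2 ->
  exists xi tau eta : R -> R -> R -> R,
    lie_point_symmetry (fisherJ f (gexp k1 k2)) xi tau eta /\ ~ const_multiple_dt xi tau eta.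
Proof.
  intros Hf [(k3 & k4 & _ & _ & Hfe) | [(k3 & k5 & _ & Hk5 & Hfe) | (k5 & _ & Hfe)]];
    eexists _, _, _.
  - split; [exact (symmetry_exp_scaling f k1 k2 k3 k4 Hf Hfe)|].
    apply (not_const_multiple_dt _ _ _ 1 0 0); lra.
  - split; [exact (symmetry_exp_time f k1 k2 k3 k5 Hf Hfe)|].
    apply (not_const_multiple_dt _ _ _ 1 0 0); [lra|].
    apply Rmult_integral_contrapositive. split; [exact Hk5 | apply Rgt_not_eq, exp_pos].
  - split; [exact (symmetry_const_scaling f k1 k2 k5 Hf Hfe)|].
    apply (not_const_multiple_dt _ _ _ 1 0 0); lra.
Qed.

Theorem theorem1 (f : R -> R) (k1 k2 : R) :
  smooth1 f -> (exists v, f v <> 0) -> k1 <> 0 -> k2 <> 0 ->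
  ( ( exists xi tau eta : R -> R -> R -> R,
        lie_point_symmetry (fisherJ f (gexp k1 k2)) xi tau eta /\
        ~ const_multiple_dt xi tau eta )
    <->
    ( (exists k3 k4, k3 <> 0 /\ k4 <> 0 /\
         forall v, f v = k3 * exp (k4 * v))
      \/ (exists k3 k5, k3 <> 0 /\ k5 <> 0 /\
         forall v, f v = k3 * exp (k2 * v) + k5)
      \/ (exists k5, k5 <> 0 /\ forall v, f v = k5) ) )
  /\
  (* (a) *)
  (forall k3 k4, k3 <> 0 -> k4 <> 0 -> (forall v, f v = k3 * exp (k4 * v)) ->
     lie_point_symmetry (fisherJ f (gexp k1 k2))
       (fun x t u => 0) (fun x t u => 1) (fun x t u => 0)
     /\ lie_point_symmetry (fisherJ f (gexp k1 k2))
       (fun x t u => (k4 - k2) * x) (fun x t u => 2 * k4 * t)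
       (fun x t u => -2))
  /\
  (* (b) *)
  (forall k3 k5, k3 <> 0 -> k5 <> 0 ->
     (forall v, f v = k3 * exp (k2 * v) + k5) ->
     lie_point_symmetry (fisherJ f (gexp k1 k2))
       (fun x t u => 0) (fun x t u => 1) (fun x t u => 0)
     /\ lie_point_symmetry (fisherJ f (gexp k1 k2))
       (fun x t u => 0) (fun x t u => exp (- k2 * k5 * t))
       (fun x t u => k5 * exp (- k2 * k5 * t)))
  /\
  (* (c) *)
  (forall k5, k5 <> 0 -> (forall v, f v = k5) ->
     lie_point_symmetry (fisherJ f (gexp k1 k2))
       (fun x t u => 0) (fun x t u => 1) (fun x t u => 0)
     /\ lie_point_symmetry (fisherJ f (gexp k1 k2))
       (fun x t u => 0) (fun x t u => exp (- k2 * k5 * t))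
       (fun x t u => k5 * exp (- k2 * k5 * t))
     /\ lie_point_symmetry (fisherJ f (gexp k1 k2))
       (fun x t u => k2 * x) (fun x t u => 0) (fun x t u => 2)).
Proof.
  intros Hf Hnz Hk1 Hk2.
  assert (Hconst : forall k5, (forall v, f v = k5) -> forall v, f v = 0 * exp (k2 * v) + k5)
    by (intros k5 Hk5 v; rewrite Hk5; ring).
  split; [split|split; [|split]].
  - intros (xi & tau & eta & Hsym & Hnc).
    exact (fisher_family_of_symmetry f k1 k2 xi tau eta Hf Hnz Hk1 Hk2 Hsym Hnc).
  - apply symmetry_of_fisher_family, Hf.
  - intros k3 k4 _ _ Hfe.
    split; [apply symmetry_time_translation | apply (symmetry_exp_scaling f k1 k2 k3 k4)];
      assumption.
  - intros k3 k5 _ _ Hfe.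
    split; [apply symmetry_time_translation | apply (symmetry_exp_time f k1 k2 k3 k5)];
      assumption.
  - intros k5 _ Hfe. split; [|split].
    + apply symmetry_time_translation, Hf.
    + exact (symmetry_exp_time f k1 k2 0 k5 Hf (Hconst k5 Hfe)).
    + exact (symmetry_const_scaling f k1 k2 k5 Hf Hfe).
Qed.
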